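(* Let $G$ be a finite transitive permutation group on a set $V$ whose point stabilizers have order $2$ or $3$. Then the complement $\overline{\Gamma_G}$ of the derangement graph of $G$ is arc-transitive.
   Context: An element of $G$ is a derangement if it fixes no point of $V$. Let $\mathcal{D}$ be the set of derangements of $G$. The derangement graph $\Gamma_G=\mathrm{Cay}(G,\mathcal{D})$ is the graph with vertex set $G$ in which $g,h\in G$ are adjacent if and only if $g^{-1}h \in \mathcal{D}$; $\overline{\Gamma_G}$ is its complement graph (distinct $g,h$ adjacent iff $g^{-1}h$ fixes some point). *)

From mathcomp Require Import all_boot all_fingroup action.
Set Implicit Arguments. Unset Strict Implicit. Unset Printing Implicit Defensive.
Local Open Scope group_scope.

Definition derangement (V : finType) (x : {perm V}) : bool := [forall v, x v != v].

(* Derangement graph Gamma_G = Cay(G, D): vertex set G (as the finite type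
   subg_of G of elements of G), g ~ h iff g^-1 h is a derangement. *)
Definition derangement_adj (V : finType) (G : {group {perm V}}) : rel (subg_of G) :=
  fun g h => derangement ((sgval g)^-1 * sgval h).

Definition complement_rel (T : finType) (e : rel T) : rel T :=
  fun x y => (x != y) && ~~ e x y.

Definition graph_aut (T : finType) (e : rel T) (s : {perm T}) : Prop :=
  forall x y, e (s x) (s y) = e x y.

Definition arc_transitive (T : finType) (e : rel T) : Prop :=
  forall x1 y1 x2 y2, e x1 y1 -> e x2 y2 ->
    exists s : {perm T}, [/\ graph_aut e s, s x1 = x2 & s y1 = y2].
Arguments derangement_adj {V} G _ _.

From mathcomp Require Import all_boot all_fingroup action.

Set Implicit Arguments.
Unset Strict Implicit.
Unset Printing Implicit Defensive.

Local Open Scope group_scope.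

(* The complement of the derangement graph is the Cayley graph of G whose
   connection set consists of the non-identity elements fixing some point.
   This set is closed under conjugation and inversion, so left translations,
   conjugations and inversion are graph automorphisms, and arc-transitivity
   reduces to: any two such elements s, t are conjugate up to inversion.
   Conjugating a point fixed by s to a point w fixed by t (transitivity) puts
   both in the stabiliser of w, a group of order at most 3, in which two
   non-identity elements are equal or mutually inverse. *)

Lemma eq_or_eqV_card_le3 (gT : finGroupType) (H : {group gT}) (s t : gT) :
  #|H| <= 3 -> s \in H -> t \in H -> s != 1 -> t != 1 -> s = t \/ s = t^-1.
Proof.
(* Otherwise 1, t, s, s * t are four distinct elements of H. *)
move=> le_H3 Hs Ht nts ntt.
have [-> | nst] := eqVneq s t; first by left.
have [-> | nstV] := eqVneq s t^-1; first by right.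
have nst_t : t != s * t by rewrite -{1}[t]mul1g (inj_eq (mulIg t)) eq_sym.
have nst_s : s != s * t by rewrite -{1}[s]mulg1 (inj_eq (mulgI s)) eq_sym.
have uniq4 : uniq [:: 1; t; s; s * t].
  rewrite /= !inE !negb_or ![1 == _]eq_sym mulg_eq1 (eq_sym t).
  by rewrite nst nstV ntt nts nst_t nst_s.
have sub4 : [:: 1; t; s; s * t] \subset H.
  by apply/subsetP=> x; rewrite !inE => /or4P[] /eqP->; rewrite ?group1 ?groupM.
have := subset_leq_card sub4.
by rewrite (card_uniqP uniq4) leqNgt (leq_ltn_trans le_H3).
Qed.

Lemma graph_aut_perm (T : finType) (e : rel T) (f : T -> T) (f_inj : injective f) :
  {mono f : x y / e x y} -> graph_aut e (perm f_inj).
Proof. by move=> fe x y; rewrite !permE fe. Qed.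

Lemma graph_autM (T : finType) (e : rel T) (s1 s2 : {perm T}) :
  graph_aut e s1 -> graph_aut e s2 -> graph_aut e (s1 * s2).
Proof. by move=> e_s1 e_s2 x y; rewrite !permM e_s2 e_s1. Qed.

Lemma complement_rel_mono (T : finType) (e : rel T) (f : T -> T) :
  injective f -> {mono f : x y / e x y} -> {mono f : x y / complement_rel e x y}.
Proof. by move=> f_inj fe x y; rewrite /complement_rel (inj_eq f_inj) fe. Qed.

Lemma complement_rel_sym (T : finType) (e : rel T) :
  symmetric e -> symmetric (complement_rel e).
Proof. by move=> e_sym x y; rewrite /complement_rel eq_sym e_sym. Qed.

Section InvariantGraphOnGroup.

Variables (gT : finGroupType) (e : rel gT).
Hypothesis e_sym : symmetric e.
Hypothesis e_mulg : forall a, {mono (fun x => a * x) : x y / e x y}.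
Hypothesis e_conjg : forall g, {mono conjg^~ g : x y / e x y}.

Lemma invg_mono : {mono (fun x => x^-1) : x y / e x y}.
Proof.
(* [x * y^-1] is the conjugate of [y^-1 * x] by [y^-1]. *)
move=> x y; rewrite -(e_mulg x) mulgV [RHS]e_sym -[RHS](e_mulg y^-1) mulVg.
by rewrite -[RHS](e_conjg y^-1) conj1g conjgE invgK mulgA mulKVg.
Qed.

Lemma arc_transitive_stab1 :
  (forall s t, e 1 s -> e 1 t ->
     exists phi : {perm gT}, [/\ graph_aut e phi, phi 1 = 1 & phi s = t]) ->
  arc_transitive e.
Proof.
move=> stab_trans x1 y1 x2 y2 e_xy1 e_xy2.
have e_1 x y : e x y -> e 1 (x^-1 * y) by rewrite -(e_mulg x^-1) mulVg.
have [phi [e_phi phi1 phi_s]] := stab_trans _ _ (e_1 _ _ e_xy1) (e_1 _ _ e_xy2).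
exists (perm (mulgI x1^-1) * phi * perm (mulgI x2)); split.
- by do !apply: graph_autM => //; apply: graph_aut_perm.
- by rewrite !permM !permE mulVg phi1 mulg1.
- by rewrite !permM !permE phi_s mulKVg.
Qed.

Lemma arc_transitive_conjg_invg :
  (forall s t, e 1 s -> e 1 t -> exists g, s ^ g = t \/ s ^ g = t^-1) ->
  arc_transitive e.
Proof.
move=> conj_inv; apply: arc_transitive_stab1 => s t e_s e_t.
have e_conj g : graph_aut e (perm (@conjg_inj _ g)) by apply: graph_aut_perm.
have [g [sg_t | sg_tV]] := conj_inv s t e_s e_t.
- by exists (perm (@conjg_inj _ g)); rewrite !permE conj1g.
- exists (perm (@conjg_inj _ g) * perm (@invg_inj _)); split.
  + by apply: graph_autM => //; apply: graph_aut_perm; apply: invg_mono.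
  + by rewrite permM !permE conj1g invg1.
  + by rewrite permM !permE sg_tV invgK.
Qed.

End InvariantGraphOnGroup.

Section Derangements.

Variable V : finType.

Lemma derangementPn (s : {perm V}) : reflect (exists v, s v = v) (~~ derangement s).
Proof.
rewrite /derangement negb_forall.
apply: (iffP existsP) => -[v sv]; exists v; first exact/eqP/negPn.
by rewrite sv eqxx.
Qed.

Lemma derangementJ (s g : {perm V}) : derangement (s ^ g) = derangement s.
Proof.
apply: negb_inj; apply/idP/idP=> /derangementPn[v sv]; apply/derangementPn.
  by exists (g^-1 v); move: sv; rewrite conjgE !permM => {2}<-; rewrite permK.
by exists (g v); rewrite conjgE !permM permK sv.
Qed.

Lemma derangementV (s : {perm V}) : derangement s^-1 = derangement s.
Proof.
by apply: negb_inj; apply/idP/idP=> /derangementPn[v sv]; apply/derangementPn; exists v;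
  rewrite -{1}sv ?permK ?permKV.
Qed.

End Derangements.

Section PointStabilizers.

Variables (V : finType) (G : {group {perm V}}).

Lemma conjg_in_stab (s g : {perm V}) (v : V) :
  g \in G -> s \in 'C_G[v | 'P] -> s ^ g \in 'C_G[g v | 'P].
Proof.
move=> Gg /setIP[Gs sv]; rewrite inE groupJ //=.
by rewrite -[g v]/(aperm v g) astab1_act memJ_conjg.
Qed.

Lemma nonderangement_conjg_or_invg (s t : {perm V}) :
  [transitive G, on [set: V] | 'P] -> (forall v, #|'C_G[v | 'P]| <= 3) ->
  s \in G -> t \in G -> s != 1 -> t != 1 -> ~~ derangement s -> ~~ derangement t ->
  exists2 g, g \in G & s ^ g = t \/ s ^ g = t^-1.
Proof.
move=> G_trans small_stab Gs Gt nts ntt /derangementPn[v sv] /derangementPn[w tw].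
have [g Gg /= gv] := atransP2 G_trans (in_setT v) (in_setT w).
exists g => //; apply: (eq_or_eqV_card_le3 (H := 'C_G[w | 'P]%G) (small_stab w)).
- by rewrite gv; apply: conjg_in_stab => //; rewrite inE Gs; apply/astab1P.
- by rewrite inE Gt; apply/astab1P.
- by rewrite conjg_eq1.
- exact: ntt.
Qed.

End PointStabilizers.

Section DerangementGraph.

Variables (V : finType) (G : {group {perm V}}).

Lemma derangement_adj_sym : symmetric (derangement_adj G).
Proof.
by move=> x y; rewrite /derangement_adj -derangementV invMg invgK.
Qed.

Lemma derangement_adj_mulg (a : subg_of G) :
  {mono (fun x => a * x) : x y / derangement_adj G x y}.
Proof.
by move=> x y; rewrite /derangement_adj !sgvalM ?inE // invMg -mulgA mulKg.
Qed.

Lemma derangement_adj_conjg (g : subg_of G) :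
  {mono conjg^~ g : x y / derangement_adj G x y}.
Proof.
by move=> x y; rewrite /derangement_adj !morphJ ?inE // -conjVg -conjMg derangementJ.
Qed.

Lemma complement_derangement_adj1 (s : subg_of G) :
  complement_rel (derangement_adj G) 1 s = (sgval s != 1) && ~~ derangement (sgval s).
Proof.
by rewrite /complement_rel /derangement_adj eq_sym -(inj_eq subg_inj) !morph1 invg1 mul1g.
Qed.

End DerangementGraph.

Theorem lemma2p4 (V : finType) (G : {group {perm V}}) :
  [transitive G, on [set: V] | 'P] ->
  (forall v : V, #|('C_G[v | 'P])%g| = 2 \/ #|('C_G[v | 'P])%g| = 3) ->
  arc_transitive (complement_rel (derangement_adj G)).
Proof.
move=> G_trans stab_2_3.
have small_stab v : #|'C_G[v | 'P]| <= 3 by case: (stab_2_3 v) => ->.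
apply: arc_transitive_conjg_invg.
- exact/complement_rel_sym/derangement_adj_sym.
- by move=> a; apply: complement_rel_mono (mulgI a) (derangement_adj_mulg a).
- by move=> g; apply: complement_rel_mono (@conjg_inj _ g) (derangement_adj_conjg g).
move=> s t; rewrite !complement_derangement_adj1 => /andP[nts der_s] /andP[ntt der_t].
have [g Gg sg_t] := nonderangement_conjg_or_invg G_trans small_stab
  (subgP s) (subgP t) nts ntt der_s der_t.
exists (subg G g).
by case: sg_t => sg_t; [left | right]; apply: subg_inj; rewrite /= subgK.
Qed.
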